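(* Let $p\ge5$ be prime, $n\ge1$, $a=(p-1)/(p-1,12)$, $b=(p+1)/(p+1,12)$. Define the $(n+1)\times(n+1)$ matrix $M=(M_{ij})_{i,j=0}^n$ by $M_{ij}=p^i/24$ if $j\ge n/2$ and $i\le j$; $M_{ij}=p^{2j-i}/24$ if $j\ge n/2$ and $i>j$; $M_{ij}=p^{n-i}/24$ if $j<n/2$ and $i\ge j$; $M_{ij}=p^{n+i-2j}/24$ if $j<n/2$ and $i<j$. Then $\det M=(ab)^np^{(n-1)(3n-1)/4}/24$ if $n$ is odd, and $\det M=(ab)^np^{n(3n-4)/4}/24$ if $n$ is even.
   Context: Note $ab=(p^2-1)/24$ for $p\ge5$. ($M_{ij}$ is the order of $\eta(p^i\tau)$ at a cusp of level $p^j$ of $X_0(p^n)$.) *)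

From HB Require Import structures.
From mathcomp Require Import all_boot all_order all_algebra.
Set Implicit Arguments. Unset Strict Implicit. Unset Printing Implicit Defensive.
Import Order.TTheory GRing.Theory Num.Theory.
Local Open Scope ring_scope.

(* The (n+1)x(n+1) matrix M_{ij}, i,j = 0..n, with rational entries.
   "j >= n/2" is read as the real inequality, i.e. 2*j >= n in nat.
   All exponents are natural numbers in their respective cases. *)
Definition Mentry (p n i j : nat) : rat :=
  if (n <= 2 * j)%N then
    (if (i <= j)%N then (p ^ i)%:R / 24 else (p ^ (2 * j - i))%:R / 24)
  else
    (if (j <= i)%N then (p ^ (n - i))%:R / 24 else (p ^ (n + i - 2 * j))%:R / 24).

Definition Mmat (p n : nat) : 'M[rat]_(n.+1) :=
  \matrix_(i < n.+1, j < n.+1) Mentry p n i j.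

Definition a_of (p : nat) : nat := (p - 1) %/ gcdn (p - 1) 12.
Definition b_of (p : nat) : nat := (p + 1) %/ gcdn (p + 1) 12.

(** Right-multiplying [M] by a unipotent matrix [C] performs the column
    operations [col j -= e_j col (j+1)] for the columns [j <= c] left of the
    cut [2 j < n], and [col j -= col (j-1)] for the columns [j > c+1].  The
    result [T] has, in every column left of the cut, zeros below the diagonal
    and, in every column [j > c+1], zeros above it; ordering the indices as
    [0, ..., c, n, n-1, ..., c+2, c+1] makes [T] triangular.  So
    [det M = det T] is the product of its diagonal entries, which are
    [p^k (p^2-1)/24 = p^k ab] except for the single entry [p^(c+1)/24]; the
    exponents of [p] add up to the stated ones. *)

From HB Require Import structures.
From mathcomp Require Import all_boot all_order all_algebra fingroup perm.
From mathcomp Require Import zify ring.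
Import Order.TTheory GRing.Theory Num.Theory.
Local Open Scope ring_scope.

(* A permutation preserves the sum of the ranks, so unless it is the identity
   it lowers the rank of some index, where [A] vanishes. *)
Lemma det_trig_rank (R : comPzRingType) (m : nat) (A : 'M[R]_m)
    (rank : 'I_m -> nat) :
  injective rank -> (forall i j, (rank j < rank i)%N -> A i j = 0) ->
  \det A = \prod_i A i i.
Proof.
move=> rank_inj A0; rewrite /determinant (bigD1 1%g) //= odd_perm1 expr0 mul1r.
rewrite [X in _ + X]big1 ?addr0; first by apply: eq_bigr => i _; rewrite perm1.
move=> s s_neq1; suff [i lt_si_i] : exists i, (rank (s i) < rank i)%N.
  by rewrite (bigD1 i) //= A0 // mul0r mulr0.
apply/existsP; apply: contraR s_neq1; rewrite negb_exists => /forallP s_ge.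
have le_rank i : (rank i <= rank (s i))%N by rewrite leqNgt s_ge.
have := leqif_sum (P := predT) (fun i _ => leqif_eq (le_rank i)).
have -> : (\sum_(i | predT i) rank (s i) = \sum_(i | predT i) rank i)%N.
  by rewrite [RHS](reindex_inj (@perm_inj _ s)).
move=> [_]; rewrite eqxx => /esym/forallP rank_s; apply/eqP/permP => i; rewrite perm1.
by apply: rank_inj; apply/eqP; rewrite eq_sym; have := rank_s i.
Qed.

Lemma sum_delta (R : pzSemiRingType) (F : nat -> R) (m x : nat) :
  \sum_(k < m) F k * (k == x :> nat)%:R = if (x < m)%N then F x else 0.
Proof.
rewrite -(big_ord1_eq (@GRing.add R)) [RHS]big_mkcond; apply: eq_bigr => k _.
by case: eqP; rewrite ?mulr1 ?mulr0.
Qed.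

Lemma sum_arith_mul2 (a k : nat) :
  ((\sum_(0 <= i < k) (a + i)) * 2 + k = k * (2 * a + k))%N.
Proof.
elim: k => [|k IHk]; first by rewrite big_geq.
by rewrite big_nat_recr //=; nia.
Qed.

Lemma gcd12_mul (p : nat) :
  coprime p 6 -> (gcdn (p - 1) 12 * gcdn (p + 1) 12 = 24)%N.
Proof.
move=> p_cop6; have p_gt0 : (0 < p)%N by case: p p_cop6.
rewrite -gcdn_modl -[gcdn (p + 1)%N _]gcdn_modl.
rewrite (_ : (p - 1) %% 12 = (p %% 12 + 11) %% 12)%N; last by lia.
rewrite (_ : (p + 1) %% 12 = (p %% 12 + 1) %% 12)%N; last by lia.
rewrite -coprime_modl (_ : p %% 6 = p %% 12 %% 6)%N in p_cop6; last by lia.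
rewrite coprime_modl in p_cop6.
have : (p %% 12 < 12)%N by rewrite ltn_mod.
by move: (p %% 12)%N p_cop6 => r; do 12? case: r => [//|r].
Qed.

Lemma ab_mul24 (p : nat) :
  coprime p 6 -> (a_of p * b_of p * 24 = (p - 1) * (p + 1))%N.
Proof.
move=> p_cop6; rewrite -(gcd12_mul _ p_cop6) mulnACA.
by rewrite !divnK ?dvdn_gcdl.
Qed.

Definition ab (p : nat) : rat := (p%:R ^+ 2 - 1) / 24.

Lemma natr_ab (p : nat) : coprime p 6 -> (a_of p * b_of p)%:R = ab p.
Proof.
move=> p_cop6; have p_gt0 : (0 < p)%N by case: p p_cop6.
apply: (@mulIf _ 24) => //; rewrite -natrM ab_mul24 //.
by rewrite natrM natrB // natrD /ab; field.
Qed.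

Lemma prime_ge5_coprime6 (p : nat) : prime p -> (5 <= p)%N -> coprime p 6.
Proof.
move=> p_pr p_ge5; rewrite prime_coprime //; apply/negP => p_dvd6.
have le_p6 := dvdn_leq (isT : (0 < 6)%N) p_dvd6.
by move: p_pr p_dvd6; have [->|->] : p = 5%N \/ p = 6%N by lia.
Qed.

Section MentryRegions.
Variables p n i j : nat.

Lemma Mentry_left_ge : (2 * j < n)%N -> (j <= i)%N ->
  Mentry p n i j = (p ^ (n - i))%:R / 24.
Proof. by move=> lt_2jn le_ji; rewrite /Mentry ifF ?le_ji //; apply/negbTE; lia. Qed.

Lemma Mentry_left_lt : (2 * j < n)%N -> (i < j)%N ->
  Mentry p n i j = (p ^ (n + i - 2 * j))%:R / 24.
Proof. by move=> lt_2jn lt_ij; rewrite /Mentry !ifF //; apply/negbTE; lia. Qed.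

Lemma Mentry_right_le : (n <= 2 * j)%N -> (i <= j)%N ->
  Mentry p n i j = (p ^ i)%:R / 24.
Proof. by move=> le_n2j le_ij; rewrite /Mentry le_n2j le_ij. Qed.

Lemma Mentry_right_ge : (n <= 2 * j)%N -> (j <= i)%N ->
  Mentry p n i j = (p ^ (2 * j - i))%:R / 24.
Proof.
move=> le_n2j le_ji; rewrite /Mentry le_n2j; case: ifP => // le_ij.
by rewrite (_ : 2 * j - i = i)%N //; lia.
Qed.

End MentryRegions.

(* The largest [j] with [2 j < n], i.e. the last column in the [j < n/2]
   branch of [Mentry]. *)
Definition lcol (n : nat) : nat := ((n - 1) %/ 2)%N.

Section CutColumn.
Context {n : nat} (n_gt0 : (0 < n)%N).
Local Notation c := (lcol n).

Lemma lcol_bounds : (2 * c < n <= 2 * c + 2)%N.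
Proof. by rewrite /lcol; lia. Qed.

Lemma lcol_odd : n = if odd n then (2 * c).+1 else (2 * c).+2.
Proof.
by rewrite /lcol; have := odd_double_half n; case: (odd n); lia.
Qed.

Lemma diag_exponent_sum :
  (\sum_(0 <= i < c.+1) (n.-1 - i) + \sum_(c.+2 <= i < n.+1) (i - 2) =
   if odd n then (n - 1) * (3 * n - 1) %/ 4 else n * (3 * n - 4) %/ 4)%N.
Proof.
have /andP[lt2cn len2c] := lcol_bounds.
have -> : (\sum_(0 <= i < c.+1) (n.-1 - i) = \sum_(0 <= i < c.+1) (n.-1 - c + i))%N.
  by rewrite big_nat_rev; apply: eq_big_nat => i /andP[_ lt_ic]; lia.
have -> : (\sum_(c.+2 <= i < n.+1) (i - 2) = \sum_(0 <= i < n.+1 - c.+2) (c + i))%N.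
  by rewrite -{1}[c.+2]add0n big_addn; apply: eq_big_nat => i _; lia.
have := sum_arith_mul2 (n.-1 - c) c.+1; have := sum_arith_mul2 c (n.+1 - c.+2).
move: (\sum_(0 <= i < c.+1) _)%N (\sum_(0 <= i < n.+1 - c.+2) _)%N => S1 S2 eS2 eS1.
have := lcol_odd; case: (odd n) => n_par.
  have [eL eR e1 e3] : [/\ n.-1 - c = c, n.+1 - c.+2 = c, n - 1 = 2 * c
                         & 3 * n - 1 = 6 * c + 2]%N by split; lia.
  rewrite eL in eS1; rewrite eR in eS2; rewrite e1 e3.
  have -> : (2 * c * (6 * c + 2) = (S1 + S2) * 4)%N by nia.
  by rewrite mulnK.
have [eL eR e3] : [/\ n.-1 - c = c.+1, n.+1 - c.+2 = c.+1
                    & 3 * n - 4 = 6 * c + 2]%N by split; lia.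
rewrite eL in eS1; rewrite eR in eS2; rewrite e3.
have -> : (n * (6 * c + 2) = (S1 + S2) * 4)%N by nia.
by rewrite mulnK.
Qed.

End CutColumn.

Section ColumnReduction.
Variables p n : nat.
Hypothesis n_gt0 : (0 < n)%N.
Local Notation c := (lcol n).

(* Below the cut, column [c+1] equals [p] times column [c] when [n] is odd,
   and equals it when [n] is even. *)
Definition colcoef (j : nat) : rat := if (j == c) && odd n then p%:R^-1 else 1.

Definition colop : 'M[rat]_n.+1 :=
  \matrix_(k < n.+1, j < n.+1) ((k == j :> nat)%:R -
    if (j <= c)%N then colcoef j * (k == j.+1 :> nat)%:R
    else if (c.+1 < j)%N then (k.+1 == j :> nat)%:R else 0).

Definition Tentry (i j : nat) : rat :=
  if (j <= c)%N then Mentry p n i j - colcoef j * Mentry p n i j.+1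
  else if (c.+1 < j)%N then Mentry p n i j - Mentry p n i j.-1
  else Mentry p n i j.

Definition Tmat : 'M[rat]_n.+1 := \matrix_(i < n.+1, j < n.+1) Tentry i j.

Lemma mulmx_colop : Mmat p n *m colop = Tmat.
Proof.
apply/matrixP => i j; rewrite !mxE.
under eq_bigr do rewrite !mxE mulrBr.
rewrite sumrB sum_delta ltn_ord /Tentry.
have /andP[lt2cn len2c] := lcol_bounds n_gt0.
case: ifP => le_jc.
  under eq_bigr do rewrite mulrCA.
  by rewrite -mulr_sumr sum_delta ifT ?(mulrC (colcoef j)) //; lia.
case: ifP => lt_cj; last by rewrite big1 ?subr0 // => k _; rewrite mulr0.
have pred_j k : (k.+1 == j :> nat) = (k == j.-1).
  by case: (nat_of_ord j) lt_cj => // j' _; rewrite eqSS.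
under eq_bigr do rewrite pred_j.
by rewrite sum_delta ifT //; have := ltn_ord j; lia.
Qed.

Lemma det_colop : \det colop = 1.
Proof.
clear n_gt0.
pose rank (i : 'I_n.+1) := if (i <= c.+1)%N then (c.+1 - i)%N else nat_of_ord i.
rewrite (@det_trig_rank _ _ _ rank).
- rewrite big1 // => i _; rewrite mxE eqxx.
  have [ne_i_Si ne_Si_i] : (i == i.+1 :> nat) = false /\ (i.+1 == i :> nat) = false.
    by split; apply/negbTE; lia.
  rewrite ne_i_Si ne_Si_i.
  by case: ifP => _; [|case: ifP => _]; rewrite ?mulr0 ?subr0.
- move=> i k; rewrite /rank => eq_rank; apply/val_inj => /=; move: eq_rank.
  by case: ifP => ?; case: ifP => ?; lia.
- move=> k j; rewrite mxE /rank => lt_rank.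
  rewrite (_ : (k == j :> nat) = false); last first.
    by apply/negbTE/eqP => eq_kj; move: lt_rank; rewrite eq_kj ltnn.
  case: ifP => le_jc; [|case: ifP => lt_cj]; last by rewrite subr0.
  + rewrite (_ : (k == j.+1 :> nat) = false) ?mulr0 ?subr0 //; apply/negbTE.
    by move: lt_rank; case: ifP => ?; case: ifP => ?; lia.
  + rewrite (_ : (k.+1 == j :> nat) = false) ?subr0 //; apply/negbTE.
    by move: lt_rank; case: ifP => ?; case: ifP => ?; lia.
Qed.


Lemma Tent_left0 (p_gt0 : (0 < p)%N) (i j : nat) : (i <= n)%N -> (j <= c)%N -> (j < i)%N -> Tentry i j = 0.
Proof.
move=> le_in le_jc lt_ji; have /andP[lt2cn len2c] := lcol_bounds n_gt0.
rewrite /Tentry le_jc (Mentry_left_ge p) /colcoef; [|lia|lia].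
have [eq_jc|ne_jc] := eqVneq j c; last first.
  by rewrite (Mentry_left_ge p) ?mul1r ?subrr //; lia.
rewrite eq_jc (Mentry_right_ge p) /=; [|lia|lia].
have p0 : (p%:R : rat) != 0 by rewrite pnatr_eq0 -lt0n.
have := lcol_odd n_gt0; case: (odd n) => n_par.
  rewrite (_ : 2 * c.+1 - i = (n - i).+1)%N ?natrX ?exprS; last by lia.
  by field.
by rewrite (_ : 2 * c.+1 - i = n - i)%N ?mul1r ?subrr //; lia.
Qed.

Lemma Tent_right0 (i j : nat) : (c.+1 < j)%N -> (i < j)%N -> Tentry i j = 0.
Proof.
move=> lt_cj lt_ij; have /andP[lt2cn len2c] := lcol_bounds n_gt0.
rewrite /Tentry leqNgt ltnW //= lt_cj.
by rewrite (Mentry_right_le p) ?(Mentry_right_le p) ?subrr //; lia.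
Qed.

Lemma det_Tmat (p_gt0 : (0 < p)%N) : \det Tmat = \prod_(i < n.+1) Tentry i i.
Proof.
pose rank (i : 'I_n.+1) :=
  if (i <= c)%N then nat_of_ord i else if i == c.+1 :> nat then n else (c.+1 + n - i)%N.
have /andP[lt2cn len2c] := lcol_bounds n_gt0.
rewrite (@det_trig_rank _ _ _ rank); first by apply: eq_bigr => i _; rewrite mxE.
  move=> i k; rewrite /rank => eq_rank; apply/val_inj => /=; move: eq_rank.
  have := ltn_ord i; have := ltn_ord k.
  by case: ifP => ?; [|case: ifP => /eqP ?]; case: ifP => ?; try case: ifP => /eqP ?; lia.
move=> i j; rewrite mxE /rank; have := ltn_ord i; have := ltn_ord j.
rewrite !ltnS => le_jn le_in.
case: ifP => [le_jc|gt_jc] lt_rank.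
  by apply: Tent_left0 => //; move: lt_rank; case: ifP => ?; [|case: ifP]; lia.
move: lt_rank; have [eq_jc|ne_jc] := eqVneq (j : nat) c.+1.
  by case: ifP => ?; [|case: ifP => /eqP ?]; lia.
move=> lt_rank; apply: Tent_right0; first lia.
by move: lt_rank; case: ifP => ?; [|case: ifP => /eqP ?]; lia.
Qed.

Lemma Tent_diag_left (p_gt0 : (0 < p)%N) (i : nat) : (i <= c)%N ->
  Tentry i i = p%:R ^+ (n.-1 - i) * ab p / p%:R.
Proof.
move=> le_ic; have /andP[lt2cn len2c] := lcol_bounds n_gt0.
have p0 : (p%:R : rat) != 0 by rewrite pnatr_eq0 -lt0n.
rewrite /Tentry le_ic /colcoef /ab (Mentry_left_ge p) ?natrX //; last by lia.
have [eq_ic|ne_ic] := eqVneq i c; last first.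
  rewrite (Mentry_left_lt p) ?natrX ?mul1r; [|lia|lia].
  have [m [-> -> ->]] : exists m,
      [/\ n - i = m.+2, n + i - 2 * i.+1 = m & n.-1 - i = m.+1]%N.
    by exists (n - i - 2)%N; split; lia.
  by rewrite !exprS; field.
rewrite eq_ic (Mentry_right_le p) ?natrX ?andTb; [|lia|lia].
have := lcol_odd n_gt0; case: (odd n) => n_par.
  have [-> ->] : (n - c = c.+1 /\ n.-1 - c = c)%N by split; lia.
  by rewrite exprS; field.
have [-> ->] : (n - c = c.+2 /\ n.-1 - c = c.+1)%N by split; lia.
by rewrite !exprS; field.
Qed.

Lemma Tent_diag_mid : Tentry c.+1 c.+1 = p%:R ^+ c.+1 / 24.
Proof.
have /andP[lt2cn len2c] := lcol_bounds n_gt0.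
by rewrite /Tentry ltnn ifN -?ltnNge // (Mentry_right_le p) ?natrX //; lia.
Qed.

Lemma Tent_diag_right (i : nat) : (c.+1 < i)%N -> (i <= n)%N ->
  Tentry i i = p%:R ^+ (i - 2) * ab p.
Proof.
move=> lt_ci le_in; have /andP[lt2cn len2c] := lcol_bounds n_gt0.
rewrite /Tentry lt_ci ifN -?ltnNge; last by lia.
rewrite (Mentry_right_le p) //; last by lia.
rewrite (Mentry_right_ge p) ?natrX /ab; [|lia|lia].
have [m [-> -> ->]] : exists m, [/\ i = m.+2, 2 * m.+1 - m.+2 = m & m.+2 - 2 = m]%N.
  by exists (i - 2)%N; split; lia.
by rewrite !exprS; field.
Qed.

Lemma prod_Tent_diag (p_gt0 : (0 < p)%N) : \prod_(i < n.+1) Tentry i i =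
  p%:R ^+ (\sum_(0 <= i < c.+1) (n.-1 - i) + \sum_(c.+2 <= i < n.+1) (i - 2))
  * ab p ^+ n / 24.
Proof.
have /andP[lt2cn len2c] := lcol_bounds n_gt0.
rewrite -(big_mkord xpredT (fun i => Tentry i i)).
rewrite (@big_cat_nat _ _ _ c.+1) //; last by lia.
rewrite (@big_cat_nat _ _ _ c.+2 c.+1) //; last by lia.
rewrite big_nat1 Tent_diag_mid.
rewrite (@eq_big_nat _ _ _ 0 _ _ (fun i => p%:R ^+ (n.-1 - i) * ab p / p%:R));
  last by move=> i /andP[_ lt_ic]; rewrite Tent_diag_left.
rewrite (@eq_big_nat _ _ _ c.+2 _ _ (fun i => p%:R ^+ (i - 2) * ab p));
  last by move=> i /andP[lt_ci lt_in]; rewrite Tent_diag_right.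
rewrite !big_split /= !prodr_const_nat !prodrXr subn0 /ab.
have -> : ((p%:R ^+ 2 - 1) / 24 : rat) ^+ n =
    ((p%:R ^+ 2 - 1) / 24) ^+ c.+1 * ((p%:R ^+ 2 - 1) / 24) ^+ (n.+1 - c.+2).
  by rewrite -exprD; congr (_ ^+ _); lia.
have pc0 : (p%:R : rat) ^+ c.+1 != 0 by rewrite expf_neq0 // pnatr_eq0 -lt0n.
by rewrite exprD !exprMn !exprVn; field; rewrite pc0 !expf_neq0.
Qed.

End ColumnReduction.

Theorem mainTheorem8 (p n : nat) (hp : prime p) (hp5 : (5 <= p)%N) (hn : (1 <= n)%N) :
  \det (Mmat p n) =
    if odd n then
      ((a_of p * b_of p) ^ n * p ^ ((n - 1) * (3 * n - 1) %/ 4))%:R / 24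
    else
      ((a_of p * b_of p) ^ n * p ^ (n * (3 * n - 4) %/ 4))%:R / 24.
Proof.
have p_gt0 := prime_gt0 hp.
have := det_mulmx (Mmat p n) (colop p n).
rewrite mulmx_colop // det_Tmat // det_colop mulr1 => <-.
rewrite prod_Tent_diag // diag_exponent_sum //.
by case: (odd n);
  rewrite natrM !natrX natr_ab ?prime_ge5_coprime6 // (mulrC (ab p ^+ n)).
Qed.
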